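(* Let $2\le r<s$ be coprime integers and let $\pi=\langle u,v\mid u^r=v^s\rangle$ be the group of the $(r,s)$ torus knot, with meridian $m=u^nv^{-k}$ and longitude $l=v^s m^{-rs}$, where $k,n\in\mathbb{Z}$ satisfy $-rk+sn=1$. Let $X,Y\in H[\pi]$ be the images of $m,l$. Then $Y\in H^+[\pi][X^{\pm1}]$; i.e. every torus knot satisfies the Brumfiel–Hilden condition.
   Context: For a group $\pi$, the Brumfiel–Hilden algebra is $H[\pi]:=\mathbb{C}[\pi]/I$, where $I$ is the two-sided ideal of the group algebra generated by all elements $g(h+h^{-1})-(h+h^{-1})g$ with $g,h\in\pi$. $H^+[\pi]\subset H[\pi]$ is the subalgebra generated by the images of all $g+g^{-1}$, $g\in\pi$. For an element $X\in H[\pi]$ which is the image of a group element, $H^+[\pi][X^{\pm1}]$ denotes the subalgebra of $H[\pi]$ generated by $H^+[\pi]$, $X$ and $X^{-1}$. A knot $K\subset S^3$ with group $\pi=\pi_1(S^3\setminus K)$ and standard (commuting) meridian $m$ and longitude $l$ is said to satisfy the Brumfiel–Hilden condition if the image $Y$ of $l$ in $H[\pi]$ lies in $H^+[\pi][X^{\pm1}]$, where $X$ is the image of $m$. The element $m$ does not depend on the choice of the solution $(k,n)$. *)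

From HB Require Import structures.
From mathcomp Require Import all_boot all_order all_algebra.
Set Implicit Arguments. Unset Strict Implicit. Unset Printing Implicit Defensive.
Import Order.TTheory GRing.Theory Num.Theory.
Local Open Scope ring_scope.

(* Words in the generators u, v of pi = < u, v | u^r = v^s > and their inverses. *)
Inductive letter := LU | LUi | LV | LVi.
Definition word := seq letter.

Definition linv (x : letter) : letter :=
  match x with LU => LUi | LUi => LU | LV => LVi | LVi => LV end.

Definition winv (w : word) : word := rev (map linv w).

Definition wpow (x : letter) (z : int) : word :=
  if (0 <= z)%R then nseq `|z|%N x else nseq `|z|%N (linv x).

Definition meridian (k n : int) : word := wpow LU n ++ wpow LV (- k).

Definition longitude (r s : nat) (k n : int) : word :=
  nseq s LV ++ flatten (nseq (r * s) (winv (meridian k n))).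

Section Rep.
Variables (F : comNzRingType) (A : algType F) (a ai b bi : A).

Definition evl (x : letter) : A :=
  match x with LU => a | LUi => ai | LV => b | LVi => bi end.
Definition evw (w : word) : A := foldr (fun x acc => evl x * acc) 1 w.

(* (a, ai, b, bi) define an algebra homomorphism C[pi] -> A (i.e. a group hom
   pi -> A^x, with ai, bi the inverses of a, b and a^r = b^s) which kills the
   Brumfiel-Hilden ideal I, i.e. factors through H[pi]. *)
Definition is_BHrep (r s : nat) : Prop :=
  [/\ a * ai = 1 /\ ai * a = 1, b * bi = 1 /\ bi * b = 1, a ^+ r = b ^+ s &
      (forall g h : word,
        evw g * (evw h + evw (winv h)) = (evw h + evw (winv h)) * evw g)].
End Rep.

(* Formal expressions generating the subalgebra H^+[pi][X^{+-1}]: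
   scalars, the elements g + g^{-1} (g in pi), X, X^{-1}, sums, products. *)
Inductive bhterm (F : Type) :=
| TC of F
| TSym of word
| TX
| TXi
| TAdd of bhterm F & bhterm F
| TMul of bhterm F & bhterm F.
Arguments TX {F}. Arguments TXi {F}.

Section Eval.
Variables (F : comNzRingType) (A : algType F) (a ai b bi : A) (k n : int).
Fixpoint evt (t : bhterm F) : A :=
  match t with
  | TC c => c%:A
  | TSym g => evw a ai b bi g + evw a ai b bi (winv g)
  | TX => evw a ai b bi (meridian k n)
  | TXi => evw a ai b bi (winv (meridian k n))
  | TAdd t1 t2 => evt t1 + evt t2
  | TMul t1 t2 => evt t1 * evt t2
  end.
End Eval.

From HB Require Import structures.
From mathcomp Require Import all_boot all_order all_algebra.
From mathcomp Require Import zify.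
Set Implicit Arguments.
Unset Strict Implicit.
Unset Printing Implicit Defensive.
Import Order.TTheory GRing.Theory Num.Theory.
Local Open Scope ring_scope.

(* In H[pi] every element g + g^-1 is central, and so is u^r = v^s.  Since
   l = u^r m^(-rs), it suffices to express u^r through H^+[pi] and X^(+-1).
   The Chebyshev recursion c_(j+2) = (u + u^-1) c_(j+1) - c_j gives a central
   c = c_r with c (u - u^-1) = u^r - u^-r; then c u, half of
   c (u + u^-1) + (u^r - u^-r), is central as well.  So after multiplication
   by c the generator u commutes with every group element, whence
   c m^s = c u^(ns) v^(-ks) = c u^(ns - rk) = c u, and likewise c m^-s = c u^-1.
   Therefore u^r - u^-r = c (u - u^-1) = c (X^s - X^-s), and
   u^r = ((u^r + u^-r) + c (X^s - X^-s)) / 2. *)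

Lemma winv_nseq j x : winv (nseq j x) = nseq j (linv x).
Proof. by rewrite /winv map_nseq rev_nseq. Qed.

Lemma wpow_ge0 x z : 0 <= z -> wpow x z = nseq `|z| x.
Proof. by rewrite /wpow => ->. Qed.

Lemma wpow_le0 x z : z <= 0 -> wpow x z = nseq `|z| (linv x).
Proof.
rewrite /wpow; case: ifP => // z_ge0 z_le0.
by have -> : z = 0 by apply/eqP; rewrite eq_le z_le0 z_ge0.
Qed.

Lemma bezout_signs (r s : nat) (k n : int) : (0 < r)%N -> (0 < s)%N ->
  - (r%:Z * k) + s%:Z * n = 1 ->
  [/\ 0 <= n, - k <= 0 & (`|n| * s = (r * `|k|).+1)%N] \/
  [/\ n <= 0, 0 <= - k & (r * `|k| = (`|n| * s).+1)%N].
Proof.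
move=> r_gt0 s_gt0 bez; case: (lerP 0 k) => [k_ge0 | k_lt0]; [left | right].
all: split; nia.
Qed.

Section InversePairs.
Variable R : pzRingType.
Implicit Types x y z : R.

Definition inv_pair x y := x * y = 1 /\ y * x = 1.

Lemma inv_pair_sym x y : inv_pair x y -> inv_pair y x.
Proof. by case. Qed.

Lemma inv_pairM x x' y y' : inv_pair x y -> inv_pair x' y' ->
  inv_pair (x * x') (y' * y).
Proof.
move=> [xy yx] [xy' yx']; split.
  by rewrite mulrA -(mulrA x) xy' mulr1.
by rewrite mulrA -(mulrA y') yx mulr1.
Qed.

Lemma inv_pairX x y j : inv_pair x y -> inv_pair (x ^+ j) (y ^+ j).
Proof.
move=> xy; elim: j => [|j IH]; first by rewrite !expr0; split; rewrite mulr1.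
rewrite exprS exprSr; exact: inv_pairM.
Qed.

Lemma inv_pair_uniq x y y' : inv_pair x y -> inv_pair x y' -> y = y'.
Proof. by move=> [_ yx] [xy' _]; rewrite -[y]mulr1 -xy' mulrA yx mul1r. Qed.

Lemma comm_inv_pair x y z : inv_pair x y -> GRing.comm x z -> GRing.comm y z.
Proof.
move=> [xy yx] xz; rewrite /GRing.comm -[y * z]mulr1 -xy mulrA -(mulrA y) -xz.
by rewrite mulrA yx mul1r.
Qed.

Lemma inv_pair_expSK x y j : inv_pair x y -> x ^+ j.+1 * y ^+ j = x.
Proof. by move=> xy; rewrite exprS -mulrA (inv_pairX j xy).1 mulr1. Qed.

Lemma inv_pair_expKS x y j : inv_pair x y -> y ^+ j * x ^+ j.+1 = x.
Proof. by move=> xy; rewrite exprSr mulrA (inv_pairX j xy).2 mul1r. Qed.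

Lemma inv_pair_mulXS x y j : inv_pair x y -> x * y ^+ j.+1 = y ^+ j.
Proof. by move=> xy; rewrite exprS mulrA xy.1 mul1r. Qed.

End InversePairs.

Section Evaluation.
Variables (F : comNzRingType) (A : algType F) (a ai b bi : A).
Local Notation ev := (evw a ai b bi).
Local Notation evl := (evl a ai b bi).

Lemma evw_cat w1 w2 : ev (w1 ++ w2) = ev w1 * ev w2.
Proof. by elim: w1 => [|x w IH] /=; rewrite ?mul1r // IH mulrA. Qed.

Lemma evw_nseq j x : ev (nseq j x) = evl x ^+ j.
Proof. by elim: j => [|j IH] //=; rewrite IH exprS. Qed.

Lemma evw_flatten_nseq j w : ev (flatten (nseq j w)) = ev w ^+ j.
Proof. by elim: j => [|j IH] //=; rewrite evw_cat IH exprS. Qed.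

Definition pi_elt (x : A) := exists w, x = ev w.

Lemma pi_elt_evw w : pi_elt (ev w). Proof. by exists w. Qed.

Lemma pi_elt_evl x : pi_elt (evl x). Proof. by exists [:: x]; rewrite /= mulr1. Qed.

Lemma pi_eltM x y : pi_elt x -> pi_elt y -> pi_elt (x * y).
Proof. by move=> [w ->] [w' ->]; exists (w ++ w'); rewrite evw_cat. Qed.

Lemma pi_eltX x j : pi_elt x -> pi_elt (x ^+ j).
Proof. by move=> [w ->]; exists (flatten (nseq j w)); rewrite evw_flatten_nseq. Qed.

Lemma inv_pair_evw w : inv_pair a ai -> inv_pair b bi -> inv_pair (ev w) (ev (winv w)).
Proof.
move=> a_ai b_bi; elim: w => [|x w IH]; first by split; rewrite mulr1.
rewrite /winv /= rev_cons -cats1 evw_cat /= mulr1.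
by apply: inv_pairM IH; case: x => //=; apply: inv_pair_sym.
Qed.

Definition central (y : A) := forall w, GRing.comm (ev w) y.

Lemma centralD y z : central y -> central z -> central (y + z).
Proof. by move=> cy cz w; apply: commrD. Qed.

Lemma centralB y z : central y -> central z -> central (y - z).
Proof. by move=> cy cz w; apply: commrB. Qed.

Lemma centralM y z : central y -> central z -> central (y * z).
Proof. by move=> cy cz w; apply: commrM. Qed.

Lemma central_alg (c : F) : central c%:A.
Proof. by move=> w; apply/commr_sym/comm_alg. Qed.

Lemma central_inv_pair y y' : central y -> inv_pair y y' -> central y'.
Proof. by move=> cy yy' w; apply/commr_sym/(comm_inv_pair yy')/commr_sym. Qed.

Lemma central_letters y :
  inv_pair a ai -> inv_pair b bi -> GRing.comm a y -> GRing.comm b y -> central y.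
Proof.
move=> a_ai b_bi ay byy; elim=> [|x w IH]; first exact/commr_sym/commr1.
apply: commr_sym; apply: commrM; apply: commr_sym => //.
by case: x => //=; [apply: (comm_inv_pair a_ai) | apply: (comm_inv_pair b_bi)].
Qed.

Section CentralMultiple.
Variable c : A.
Hypothesis c_central : central c.

Lemma central_mul_swap g x : central (c * g) -> pi_elt x -> c * g * x = c * x * g.
Proof. by move=> cg [w ->]; rewrite -(cg w) mulrA (c_central w). Qed.

Lemma central_mulM g h : pi_elt g -> pi_elt h ->
  central (c * g) -> central (c * h) -> central (c * (g * h)).
Proof.
move=> gg hh cg ch w; rewrite /GRing.comm !mulrA -(mulrA _ h).
rewrite (central_mul_swap cg (pi_eltM hh (pi_elt_evw w))) mulrA -(ch w).
by rewrite -(mulrA _ (c * h)) -(central_mul_swap cg hh) !mulrA.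
Qed.

Lemma central_mul_nseq j x : central (c * evl x) -> central (c * ev (nseq j x)).
Proof.
move=> cx; elim: j => [|j IH] /=; first by rewrite mulr1.
exact: central_mulM (pi_elt_evl x) (pi_elt_evw _) cx IH.
Qed.

Lemma central_mul_exprMn g h j : pi_elt g -> pi_elt h -> central (c * g) ->
  c * (g * h) ^+ j = c * g ^+ j * h ^+ j.
Proof.
move=> gg hh cg; elim: j => [|j IH]; first by rewrite !expr0 !mulr1.
have swap := central_mul_swap cg (pi_eltM (pi_eltX j gg) (pi_eltX j hh)).
rewrite exprSr mulrA IH -(mulrA c) mulrA -swap.
by rewrite exprS exprSr !mulrA.
Qed.

End CentralMultiple.
End Evaluation.

Fixpoint cheb {F : pzRingType} (j : nat) : bhterm F :=
  match j with
  | 0 => TC 0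
  | 1 => TC 1
  | (j'.+1 as j1).+1 => TAdd (TMul (TSym F [:: LU]) (cheb j1)) (TMul (TC (-1)) (cheb j'))
  end.

Definition tpow {F : pzRingType} (t : bhterm F) (j : nat) : bhterm F :=
  iter j (TMul t) (TC 1).

Definition longitude_term {F : fieldType} (r s : nat) : bhterm F :=
  TMul (TMul (TC 2^-1)
             (TAdd (TSym F (nseq r LU))
                   (TMul (cheb r) (TAdd (tpow TX s) (TMul (TC (-1)) (tpow TXi s))))))
       (tpow TXi (r * s)).

Section BrumfielHilden.
Variables (F : fieldType) (A : algType F) (a ai b bi : A) (r s : nat) (k n : int).
Hypothesis two_neq0 : (2 : F) != 0.
Hypothesis BH : is_BHrep a ai b bi r s.
Local Notation ev := (evw a ai b bi).
Local Notation evt := (evt a ai b bi k n).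
Local Notation central := (central a ai b bi).

Let a_ai : inv_pair a ai. Proof. by case: BH. Qed.
Let b_bi : inv_pair b bi. Proof. by case: BH. Qed.
Let ar_bs : a ^+ r = b ^+ s. Proof. by case: BH. Qed.

Lemma central_sym w : central (ev w + ev (winv w)).
Proof. by case: BH => _ _ _ sym_comm v; apply: sym_comm. Qed.

Lemma central_add_a_ai : central (a + ai).
Proof. by have := central_sym [:: LU]; rewrite /= !mulr1. Qed.

Lemma biXs_aiXr : bi ^+ s = ai ^+ r.
Proof. by apply: (inv_pair_uniq (inv_pairX s b_bi)); rewrite -ar_bs; apply: inv_pairX. Qed.

Lemma central_aXr : central (a ^+ r).
Proof.
apply: central_letters => //; first exact/commrX/commr_refl.
by rewrite ar_bs; apply/commrX/commr_refl.
Qed.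

Lemma central_aiXr : central (ai ^+ r).
Proof. exact: central_inv_pair central_aXr (inv_pairX r a_ai). Qed.

Lemma evt_tpow t j : evt (tpow t j) = evt t ^+ j.
Proof. by elim: j => [|j IH] /=; rewrite ?scale1r // IH exprS. Qed.

Lemma cheb_mul_sub j : evt (cheb j) * (a - ai) = a ^+ j - ai ^+ j.
Proof.
suff [] : evt (cheb j) * (a - ai) = a ^+ j - ai ^+ j /\
          evt (cheb j.+1) * (a - ai) = a ^+ j.+1 - ai ^+ j.+1 by [].
elim: j => [|j [IH1 IH2]].
  by rewrite /= scale0r scale1r mul0r mul1r subrr.
split=> //; rewrite [cheb _]/= [evt _]/= !mulr1.
rewrite mulrDl -mulrA IH2 mulr_algl scaleN1r mulNr IH1.
rewrite mulrDl !mulrBr (inv_pair_mulXS _ a_ai) (inv_pair_mulXS _ (inv_pair_sym a_ai)).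
by rewrite -!exprS opprB addrAC !subrKA.
Qed.

Lemma central_cheb j : central (evt (cheb j)).
Proof.
suff [] : central (evt (cheb j)) /\ central (evt (cheb j.+1)) by [].
elim: j => [|j [IH1 IH2]]; first by split; apply: central_alg.
split=> //; apply: centralD; apply: centralM => //; last exact: central_alg.
exact: central_sym.
Qed.

Lemma half_sum_add_diff (x y : A) : (2 : F)^-1%:A * ((x + y) + (x - y)) = x.
Proof.
by rewrite addrACA subrr addr0 mulr_algl -mulr2n -scaler_nat scalerA mulVf ?scale1r.
Qed.

Lemma half_sum_sub_diff (x y : A) : (2 : F)^-1%:A * ((x + y) - (x - y)) = y.
Proof. by rewrite opprB (addrC x) half_sum_add_diff. Qed.

Local Notation c := (evt (cheb r)).

Lemma central_cheb_mul_add : central (c * (a + ai)).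
Proof. exact: centralM (central_cheb r) central_add_a_ai. Qed.

Lemma central_cheb_mul_sub : central (c * (a - ai)).
Proof. by rewrite cheb_mul_sub; apply: centralB central_aXr central_aiXr. Qed.

Lemma central_cheb_mul_a : central (c * a).
Proof.
rewrite -(half_sum_add_diff (c * a) (c * ai)) -mulrDr -mulrBr.
exact/centralM/centralD/central_cheb_mul_sub/central_cheb_mul_add/central_alg.
Qed.

Lemma central_cheb_mul_ai : central (c * ai).
Proof.
rewrite -(half_sum_sub_diff (c * a) (c * ai)) -mulrDr -mulrBr.
exact/centralM/centralB/central_cheb_mul_sub/central_cheb_mul_add/central_alg.
Qed.

Lemma central_cheb_mul_wpowU z : central (c * ev (wpow LU z)).
Proof.
rewrite /wpow; case: ifP => _; apply: central_mul_nseq; first exact: central_cheb.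
- exact: central_cheb_mul_a.
- exact: central_cheb.
- exact: central_cheb_mul_ai.
Qed.

Hypotheses (r_gt0 : (0 < r)%N) (s_gt0 : (0 < s)%N).
Hypothesis bezout : - (r%:Z * k) + s%:Z * n = 1.

Local Notation X := (ev (meridian k n)).
Local Notation Xi := (ev (winv (meridian k n))).

Lemma wpow_factors_expr_s : ev (wpow LU n) ^+ s * ev (wpow LV (- k)) ^+ s = a.
Proof.
have [[n_ge0 k_le0 E] | [n_le0 k_ge0 E]] := bezout_signs r_gt0 s_gt0 bezout.
  rewrite wpow_ge0 // wpow_le0 // !evw_nseq /= abszN -!exprM E.
  rewrite [X in bi ^+ X]mulnC [bi ^+ _]exprM biXs_aiXr -exprM.
  exact: inv_pair_expSK.
rewrite wpow_le0 // wpow_ge0 // !evw_nseq /= abszN -!exprM.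
rewrite [X in b ^+ X]mulnC [b ^+ _]exprM -ar_bs -exprM E.
exact: inv_pair_expKS.
Qed.

Lemma cheb_mul_meridianX_s : c * X ^+ s = c * a.
Proof.
rewrite evw_cat (central_mul_exprMn (central_cheb r)).
- by rewrite -mulrA wpow_factors_expr_s.
- exact: pi_elt_evw.
- exact: pi_elt_evw.
- exact: central_cheb_mul_wpowU.
Qed.

Lemma cheb_mul_meridianVX_s : c * Xi ^+ s = c * ai.
Proof.
have XXi : X ^+ s * Xi ^+ s = 1.
  by have [-> _] := inv_pairX s (inv_pair_evw (meridian k n) a_ai b_bi).
rewrite -[c * Xi ^+ s]mulr1 -a_ai.1 mulrA.
rewrite -(central_mul_swap (central_cheb r) central_cheb_mul_a); last first.
  exact/pi_eltX/pi_elt_evw.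
by rewrite -cheb_mul_meridianX_s -(mulrA c) XXi mulr1.
Qed.

Lemma evt_longitude_term : evt (longitude_term r s) = ev (longitude r s k n).
Proof.
rewrite /longitude evw_cat evw_nseq evw_flatten_nseq /= !evt_tpow /=.
rewrite winv_nseq !evw_nseq /= -ar_bs scaleN1r mulN1r.
rewrite mulrBr cheb_mul_meridianX_s cheb_mul_meridianVX_s -mulrBr cheb_mul_sub.
by rewrite half_sum_add_diff.
Qed.

End BrumfielHilden.

Theorem theorem5p1 (F : numClosedFieldType) (r s : nat) (k n : int) :
  (2 <= r)%N -> (r < s)%N -> coprime r s ->
  - (r%:Z * k) + s%:Z * n = 1 ->
  exists T : bhterm F,
    forall (A : algType F) (a ai b bi : A),
      is_BHrep a ai b bi r s ->
      evt a ai b bi k n T = evw a ai b bi (longitude r s k n).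
Proof.
(* Coprimality follows from the Bezout identity, which is all that is used. *)
move=> r_ge2 r_lt_s _ bezout; exists (longitude_term r s) => A a ai b bi BH.
apply: evt_longitude_term => //; first by rewrite pnatr_eq0.
  exact: leq_trans r_ge2.
exact: leq_trans r_lt_s.
Qed.
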